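(* Consider the ODE $$w_r=\frac{2w^3+2w-\sqrt3(1+w^2)^{3/2}}{r},\qquad r>0.$$ Its solutions are, up to restriction to subintervals, exactly the following: (1) the constant $w\equiv\sqrt3$; (2) for each $\rho_0>0$, $w(r)=\dfrac{r^2+\frac{\sqrt3}{2}\rho_0^2}{\sqrt{\rho_0^4-(r^2+\frac{\sqrt3}{2}\rho_0^2)^2}}$ on $0<r<r_0:=\sqrt{\frac{2-\sqrt3}{2}}\rho_0$; it satisfies $w>\sqrt3$, $w(r)\to\sqrt3$ as $r\to0$, $w(r)\to+\infty$ as $r\to r_0$, and for fixed $r$, $w(r)\to\sqrt3$ as $\rho_0\to\infty$; (3) for each $a>0$ (equivalently $\rho_0>0$ with $a^2=\frac{\sqrt3}{2}\rho_0^2$), $w(r)=\dfrac{-\sqrt3(r^2-a^2)}{\sqrt{4a^4-3(r^2-a^2)^2}}=\dfrac{-(r^2-\frac{\sqrt3}{2}\rho_0^2)}{\sqrt{\rho_0^4-(r^2-\frac{\sqrt3}{2}\rho_0^2)^2}}$ on $0<r<b:=\sqrt{\frac{2+\sqrt3}{\sqrt3}}\,a=\sqrt{\frac{2+\sqrt3}{2}}\rho_0$; it satisfies $w(a)=0$, $w<\sqrt3$, $w(r)\to\sqrt3$ as $r\to0$, $w(r)\to-\infty$ as $r\to b$, and for fixed $r$, $w(r)\to\sqrt3$ as $a\to\infty$.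
   Context: This ODE arises from $v_r=\frac{2v^3+3r^2v-\sqrt3(v^2+r^2)^{3/2}}{r^3}$ with $v=u_r$, $w=v/r$, for rotationally symmetric absolute $E_1$-minimizing graphs $t=u(r)$ in the Heisenberg group. *)

From Stdlib Require Import Reals.
From Coquelicot Require Import Coquelicot.
Open Scope R_scope.

Definition Fode (w : R) : R :=
  2 * w ^ 3 + 2 * w - sqrt 3 * sqrt ((1 + w ^ 2) ^ 3).

Definition sol_on (a b : Rbar) (w : R -> R) : Prop :=
  forall r : R, Rbar_lt a r -> Rbar_lt r b -> is_derive w r (Fode (w r) / r).

Definition adm_interval (a b : Rbar) : Prop :=
  Rbar_le (Finite 0) a /\ Rbar_lt a b.

Definition w2 (rho0 r : R) : R :=
  (r ^ 2 + sqrt 3 / 2 * rho0 ^ 2) /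
  sqrt (rho0 ^ 4 - (r ^ 2 + sqrt 3 / 2 * rho0 ^ 2) ^ 2).
Definition r0 (rho0 : R) : R := sqrt ((2 - sqrt 3) / 2) * rho0.

Definition w3 (a r : R) : R :=
  - sqrt 3 * (r ^ 2 - a ^ 2) / sqrt (4 * a ^ 4 - 3 * (r ^ 2 - a ^ 2) ^ 2).
Definition w3rho (rho0 r : R) : R :=
  - (r ^ 2 - sqrt 3 / 2 * rho0 ^ 2) /
  sqrt (rho0 ^ 4 - (r ^ 2 - sqrt 3 / 2 * rho0 ^ 2) ^ 2).
Definition bnd (a : R) : R := sqrt ((2 + sqrt 3) / sqrt 3) * a.
Definition bnd_rho (rho0 : R) : R := sqrt ((2 + sqrt 3) / 2) * rho0.

(* The substitution s = w / sqrt (1 + w^2), inverted by w = s / sqrt (1 - s^2),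
   turns the equation into s_r = 2 (s - sqrt 3 / 2) / r, so (s - sqrt 3 / 2) / r^2
   is a first integral.  Every solution is therefore w = S (K r^2 + sqrt 3 / 2) with
   S(s) = s / sqrt (1 - s^2) and a constant K, for as long as K r^2 + sqrt 3 / 2 stays
   in (-1, 1): K = 0 is the constant sqrt 3, K = 1 / rho0^2 is family (2) and
   K = - sqrt 3 / (2 a^2) is family (3).  The interval ends exactly where
   K r^2 + sqrt 3 / 2 reaches 1, resp. -1, and there S sends w to +oo, resp. -oo. *)

From Stdlib Require Import Reals Lra Lia FunctionalExtensionality.
From Coquelicot Require Import Coquelicot.
Open Scope R_scope.

Lemma sqrt3_pos : 0 < sqrt 3.
Proof. apply sqrt_lt_R0; lra. Qed.

Lemma sqrt3_sqrt3 : sqrt 3 * sqrt 3 = 3.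
Proof. apply sqrt_sqrt; lra. Qed.

Lemma sqrt3_lt_2 : sqrt 3 < 2.
Proof. pose proof sqrt3_pos; pose proof sqrt3_sqrt3; nra. Qed.

Lemma sqrt3_half_range : -1 < sqrt 3 / 2 < 1.
Proof. pose proof sqrt3_pos; pose proof sqrt3_lt_2. lra. Qed.

Lemma sqrt_pow3 (x : R) : 0 <= x -> sqrt (x ^ 3) = sqrt x ^ 3.
Proof.
  intros Hx. rewrite <- (pow2_sqrt x Hx) at 1.
  rewrite <- pow_mult, (pow_mult _ 3 2); apply sqrt_pow2, pow_le, sqrt_pos.
Qed.

Lemma filterlim_within_of_locally {T : Type} {F : (T -> Prop) -> Prop} {FF : Filter F}
  (f : T -> R) (y : R) (D : R -> Prop) :
  filterlim f F (locally y) -> F (fun x => D (f x)) -> filterlim f F (within D (locally y)).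
Proof.
  intros Hf HD P [eps Heps].
  assert (Hball : F (fun x => ball y eps (f x))) by exact (Hf _ (locally_ball y eps)).
  apply (filter_imp _ _ (fun x Hx => Heps _ (proj1 Hx) (proj2 Hx)) (filter_and _ _ Hball HD)).
Qed.

Definition tan_of_sin (s : R) : R := s / sqrt (1 - s ^ 2).
Definition sin_of_tan (v : R) : R := v / sqrt (1 + v ^ 2).

Lemma sin_of_tanK (v : R) : -1 < sin_of_tan v < 1 /\ tan_of_sin (sin_of_tan v) = v.
Proof.
  unfold tan_of_sin, sin_of_tan.
  assert (HT : 0 < sqrt (1 + v ^ 2)) by (apply sqrt_lt_R0; nra).
  assert (HTT : sqrt (1 + v ^ 2) * sqrt (1 + v ^ 2) = 1 + v ^ 2) by (apply sqrt_sqrt; nra).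
  set (T := sqrt (1 + v ^ 2)) in *.
  assert (H1 : 1 - (v / T) ^ 2 = / T * / T).
  { replace ((v / T) ^ 2) with (v ^ 2 / (T * T)) by (field; lra).
    rewrite <- Rinv_mult, HTT. field. nra. }
  rewrite H1, sqrt_square by (left; apply Rinv_0_lt_compat; lra).
  split; [|field; lra].
  assert (0 < / T * / T) by (apply Rmult_lt_0_compat; apply Rinv_0_lt_compat; lra).
  assert ((v / T) ^ 2 < 1) by lra. nra.
Qed.

Lemma tan_of_sin_sqrt3 : tan_of_sin (sqrt 3 / 2) = sqrt 3.
Proof.
  unfold tan_of_sin. pose proof sqrt3_pos; pose proof sqrt3_sqrt3.
  replace (1 - (sqrt 3 / 2) ^ 2) with ((/ 2) ^ 2) by (simpl; nra).
  rewrite sqrt_pow2 by lra. field.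
Qed.

Lemma tan_of_sin_opp (s : R) : tan_of_sin (- s) = - tan_of_sin s.
Proof. unfold tan_of_sin. rewrite <- Rsqr_pow2, <- Rsqr_neg, Rsqr_pow2. unfold Rdiv. ring. Qed.

Lemma tan_of_sin_div (N D X : R) : 0 < D -> X = D ^ 2 - N ^ 2 ->
  tan_of_sin (N / D) = N / sqrt X.
Proof.
  intros HD ->. unfold tan_of_sin.
  replace (1 - (N / D) ^ 2) with ((D ^ 2 - N ^ 2) / D ^ 2) by (field; lra).
  rewrite sqrt_div_alt, sqrt_pow2 by (try apply pow_lt; lra).
  (* When X <= 0 both sides are 0, as [sqrt] and division are total. *)
  destruct (Req_dec (sqrt (D ^ 2 - N ^ 2)) 0) as [H0 | H0].
  - rewrite H0. unfold Rdiv. rewrite !Rmult_0_l, Rinv_0. ring.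
  - field. lra.
Qed.

Lemma tan_of_sin_sq (s : R) : -1 < s < 1 -> tan_of_sin s ^ 2 * (1 - s ^ 2) = s ^ 2.
Proof.
  intros Hs. unfold tan_of_sin.
  assert (HU : 0 < sqrt (1 - s ^ 2)) by (apply sqrt_lt_R0; nra).
  rewrite <- (pow2_sqrt (1 - s ^ 2)) at 2 by nra. field. lra.
Qed.

Lemma sqrt3_lt_tan_of_sin (s : R) : sqrt 3 / 2 < s < 1 -> sqrt 3 < tan_of_sin s.
Proof.
  intros Hs. pose proof sqrt3_pos; pose proof sqrt3_sqrt3.
  assert (Hsq := tan_of_sin_sq s ltac:(lra)).
  assert (Hpos : 0 < tan_of_sin s).
  { unfold tan_of_sin. apply Rdiv_lt_0_compat; [lra | apply sqrt_lt_R0; nra]. }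
  destruct (Rlt_le_dec (sqrt 3) (tan_of_sin s)) as [Hlt | Hle]; [exact Hlt | exfalso].
  assert (tan_of_sin s * tan_of_sin s <= sqrt 3 * sqrt 3) by (apply Rmult_le_compat; lra).
  assert (3 < 4 * s ^ 2) by nra.
  nra.
Qed.

Lemma tan_of_sin_lt_sqrt3 (s : R) : -1 < s < sqrt 3 / 2 -> tan_of_sin s < sqrt 3.
Proof.
  intros Hs. pose proof sqrt3_pos; pose proof sqrt3_sqrt3; pose proof sqrt3_lt_2.
  assert (Hsq := tan_of_sin_sq s ltac:(lra)).
  destruct (Rle_lt_dec s 0) as [Hneg | Hpos].
  - assert (tan_of_sin s <= 0); [| lra].
    unfold tan_of_sin, Rdiv.
    assert (0 < / sqrt (1 - s ^ 2)) by (apply Rinv_0_lt_compat, sqrt_lt_R0; nra). nra.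
  - destruct (Rlt_le_dec (tan_of_sin s) (sqrt 3)) as [Hlt | Hge]; [exact Hlt | exfalso].
    assert (sqrt 3 * sqrt 3 <= tan_of_sin s * tan_of_sin s) by (apply Rmult_le_compat; lra).
    assert (4 * s ^ 2 < 3) by nra.
    nra.
Qed.

Lemma is_derive_tan_of_sin (s : R) : -1 < s < 1 ->
  is_derive tan_of_sin s (/ sqrt (1 - s ^ 2) ^ 3).
Proof.
  intros Hs.
  assert (HU : 0 < sqrt (1 - s ^ 2)) by (apply sqrt_lt_R0; nra).
  assert (HUU : sqrt (1 - s ^ 2) * sqrt (1 - s ^ 2) = 1 - s ^ 2) by (apply sqrt_sqrt; nra).
  unfold tan_of_sin. auto_derive;
    replace (1 + - (s * (s * 1))) with (1 - s ^ 2) by ring;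
    set (U := sqrt (1 - s ^ 2)) in *.
  - repeat split; [nra | lra].
  - transitivity ((U * U + s ^ 2) / U ^ 3); [field; lra | rewrite HUU; field; lra].
Qed.

Lemma is_derive_sin_of_tan (v : R) :
  is_derive sin_of_tan v (/ sqrt (1 + v ^ 2) ^ 3).
Proof.
  assert (HT : 0 < sqrt (1 + v ^ 2)) by (apply sqrt_lt_R0; nra).
  assert (HTT : sqrt (1 + v ^ 2) * sqrt (1 + v ^ 2) = 1 + v ^ 2) by (apply sqrt_sqrt; nra).
  unfold sin_of_tan. auto_derive;
    replace (1 + v * (v * 1)) with (1 + v ^ 2) by ring;
    set (T := sqrt (1 + v ^ 2)) in *.
  - repeat split; [nra | lra].
  - transitivity ((T * T - v ^ 2) / T ^ 3); [field; lra | rewrite HTT; field; lra].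
Qed.

Lemma continuous_tan_of_sin (s : R) : -1 < s < 1 -> continuous tan_of_sin s.
Proof.
  intros Hs. apply (ex_derive_continuous (K := R_AbsRing) (V := R_NormedModule)).
  eexists. now apply is_derive_tan_of_sin.
Qed.

Lemma tan_of_sin_at_left_1 : filterlim tan_of_sin (at_left 1) (Rbar_locally p_infty).
Proof.
  apply (filterlim_ext (fun s => / (sqrt (1 - s ^ 2) * / s))).
  { intros s. unfold tan_of_sin. rewrite Rinv_mult, Rinv_inv. unfold Rdiv. ring. }
  eapply filterlim_comp; [| exact filterlim_Rinv_0_right].
  apply filterlim_within_of_locally.
  - apply (filterlim_filter_le_1 (F := locally 1)); [apply filter_le_within |].
    replace 0 with (sqrt (1 - 1 ^ 2) * / 1)
      by (rewrite pow1, Rminus_diag, sqrt_0; apply Rmult_0_l).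
    apply (continuous_mult (fun s => sqrt (1 - s ^ 2)) Rinv).
    + apply continuous_sqrt_comp, (ex_derive_continuous (K := R_AbsRing) (V := R_NormedModule)).
      auto_derive. exact I.
    + apply (ex_derive_continuous (K := R_AbsRing) (V := R_NormedModule)).
      auto_derive. lra.
  - exists (mkposreal 1 Rlt_0_1). intros s Hs Hs1.
    change (Rabs (s - 1) < 1) in Hs. apply Rabs_def2 in Hs.
    apply Rmult_lt_0_compat; [apply sqrt_lt_R0; nra | apply Rinv_0_lt_compat; lra].
Qed.

Lemma tan_of_sin_at_right_m1 : filterlim tan_of_sin (at_right (-1)) (Rbar_locally m_infty).
Proof.
  apply (filterlim_ext (fun s => - tan_of_sin (- s))).
  { intros s. now rewrite tan_of_sin_opp, Ropp_involutive. }
  eapply filterlim_comp; [| exact (filterlim_Rbar_opp p_infty)].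
  eapply filterlim_comp; [| exact tan_of_sin_at_left_1].
  replace 1 with (- -1) by ring. exact (filterlim_Ropp_right (-1)).
Qed.

Lemma Fode_tan_of_sin (s : R) : -1 < s < 1 ->
  Fode (tan_of_sin s) = 2 * (s - sqrt 3 / 2) / sqrt (1 - s ^ 2) ^ 3.
Proof.
  intros Hs.
  assert (HU : 0 < sqrt (1 - s ^ 2)) by (apply sqrt_lt_R0; nra).
  assert (HUU : sqrt (1 - s ^ 2) * sqrt (1 - s ^ 2) = 1 - s ^ 2) by (apply sqrt_sqrt; nra).
  unfold Fode, tan_of_sin. set (U := sqrt (1 - s ^ 2)) in *.
  assert (H1 : 1 + (s / U) ^ 2 = / U ^ 2).
  { replace ((s / U) ^ 2) with (s ^ 2 / (U * U)) by (field; lra).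
    replace (s ^ 2) with (1 - U * U) by lra. field. lra. }
  assert (HV : 0 < / U) by (apply Rinv_0_lt_compat; lra).
  rewrite H1, <- pow_inv, sqrt_pow3, sqrt_pow2 by (try apply pow_le; lra).
  transitivity ((2 * s ^ 3 + 2 * s * (U * U) - sqrt 3) / U ^ 3); [field; lra|].
  rewrite HUU. field. lra.
Qed.

Lemma Fode_sin_of_tan (v : R) :
  Fode v = 2 * (sin_of_tan v - sqrt 3 / 2) * sqrt (1 + v ^ 2) ^ 3.
Proof.
  assert (HT : 0 < sqrt (1 + v ^ 2)) by (apply sqrt_lt_R0; nra).
  assert (HTT : sqrt (1 + v ^ 2) * sqrt (1 + v ^ 2) = 1 + v ^ 2) by (apply sqrt_sqrt; nra).
  unfold Fode, sin_of_tan. rewrite sqrt_pow3 by nra.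
  set (T := sqrt (1 + v ^ 2)) in *.
  transitivity (2 * v * (T * T) - sqrt 3 * T ^ 3); [rewrite HTT; ring | field; lra].
Qed.

Definition sol_s (K r : R) : R := K * r ^ 2 + sqrt 3 / 2.
Definition sol_w (K r : R) : R := tan_of_sin (sol_s K r).

Lemma sol_s_at_0 (K : R) : sol_s K 0 = sqrt 3 / 2.
Proof. unfold sol_s. rewrite pow_i by lia. ring. Qed.

Lemma sol_s_0 (r : R) : sol_s 0 r = sqrt 3 / 2.
Proof. unfold sol_s. ring. Qed.

Lemma sol_w_0 (r : R) : sol_w 0 r = sqrt 3.
Proof. unfold sol_w. rewrite sol_s_0. exact tan_of_sin_sqrt3. Qed.

Lemma continuous_sol_s (K r : R) : continuous (sol_s K) r.
Proof.
  apply (ex_derive_continuous (K := R_AbsRing) (V := R_NormedModule)).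
  unfold sol_s. auto_derive. exact I.
Qed.

Lemma sol_s_range_iff (K r rb : R) : 0 <= r -> 0 < rb ->
  sol_s K rb = 1 \/ sol_s K rb = -1 -> (-1 < sol_s K r < 1 <-> r < rb).
Proof.
  unfold sol_s. intros Hr Hrb Hend.
  pose proof sqrt3_pos; pose proof sqrt3_lt_2.
  assert (Hsq : r < rb <-> r ^ 2 < rb ^ 2) by (split; intros; nra).
  rewrite Hsq. destruct Hend as [Hend | Hend].
  - assert (HK : 0 < K) by (destruct (Rle_dec K 0); [nra | lra]).
    split; [intros [_ Hs]; nra | intros Hs; split; nra].
  - assert (HK : K < 0) by (destruct (Rle_dec 0 K); [nra | lra]).
    split; [intros [Hs _]; nra | intros Hs; split; nra].
Qed.

Lemma is_derive_sol_w (K r : R) : 0 < r -> -1 < sol_s K r < 1 ->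
  is_derive (sol_w K) r (Fode (sol_w K r) / r).
Proof.
  intros Hr Hs. unfold sol_w.
  assert (HU : 0 < sqrt (1 - sol_s K r ^ 2)) by (apply sqrt_lt_R0; nra).
  apply (is_derive_ext (fun t => tan_of_sin (sol_s K t))); [reflexivity|].
  replace (Fode (tan_of_sin (sol_s K r)) / r)
    with (2 * K * r * / sqrt (1 - sol_s K r ^ 2) ^ 3).
  - apply (is_derive_comp tan_of_sin (sol_s K)); [now apply is_derive_tan_of_sin|].
    unfold sol_s. auto_derive; [easy | ring].
  - rewrite Fode_tan_of_sin by exact Hs.
    replace (sol_s K r - sqrt 3 / 2) with (K * r ^ 2) by (unfold sol_s; ring).
    field. lra.
Qed.

Lemma sol_w_solution (K rb : R) : 0 < rb -> sol_s K rb = 1 \/ sol_s K rb = -1 ->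
  sol_on 0 rb (sol_w K).
Proof.
  intros Hrb Hend r Hr Hrrb. simpl in Hr, Hrrb.
  apply is_derive_sol_w; [exact Hr |].
  apply (sol_s_range_iff K r rb); auto; lra.
Qed.

Lemma sol_s_at_left_endpoint (K rb y : R) (D : R -> Prop) : 0 < rb ->
  sol_s K rb = y -> y = 1 \/ y = -1 -> (forall s, -1 < s < 1 -> D s) ->
  filterlim (sol_s K) (at_left rb) (within D (locally y)).
Proof.
  intros Hrb <- Hend HD. apply filterlim_within_of_locally.
  - apply (filterlim_filter_le_1 (F := locally rb)); [apply filter_le_within |].
    apply continuous_sol_s.
  - exists (mkposreal rb Hrb). intros r Hr Hrrb.
    change (Rabs (r - rb) < rb) in Hr. apply Rabs_def2 in Hr.
    apply HD, (sol_s_range_iff K r rb); auto; lra.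
Qed.

Lemma sol_w_at_left_pinfty (K rb : R) : 0 < rb -> sol_s K rb = 1 ->
  filterlim (sol_w K) (at_left rb) (Rbar_locally p_infty).
Proof.
  intros Hrb Hend. apply (filterlim_comp _ _ _ (sol_s K) tan_of_sin _ (at_left 1));
    [| exact tan_of_sin_at_left_1].
  exact (sol_s_at_left_endpoint K rb 1 _ Hrb Hend (or_introl eq_refl) (fun s Hs => proj2 Hs)).
Qed.

Lemma sol_w_at_left_minfty (K rb : R) : 0 < rb -> sol_s K rb = -1 ->
  filterlim (sol_w K) (at_left rb) (Rbar_locally m_infty).
Proof.
  intros Hrb Hend. apply (filterlim_comp _ _ _ (sol_s K) tan_of_sin _ (at_right (-1)));
    [| exact tan_of_sin_at_right_m1].
  exact (sol_s_at_left_endpoint K rb (-1) _ Hrb Hend (or_intror eq_refl) (fun s Hs => proj1 Hs)).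
Qed.

Lemma sol_w_at_right_0 (K : R) : filterlim (sol_w K) (at_right 0) (locally (sqrt 3)).
Proof.
  apply (filterlim_filter_le_1 (F := locally 0)); [apply filter_le_within |].
  replace (sqrt 3) with (sol_w K 0) by (unfold sol_w; rewrite sol_s_at_0; exact tan_of_sin_sqrt3).
  apply (continuous_comp (sol_s K) tan_of_sin); [apply continuous_sol_s |].
  rewrite sol_s_at_0. exact (continuous_tan_of_sin _ sqrt3_half_range).
Qed.

Lemma sol_w_param_limit (c r : R) :
  filterlim (fun y => sol_w (c / y ^ 2) r) (Rbar_locally p_infty) (locally (sqrt 3)).
Proof.
  apply (filterlim_ext (fun y => sol_w (c * (/ y) ^ 2) r)).
  { intros y. now rewrite pow_inv. }
  apply (filterlim_comp _ _ _ Rinv (fun x => sol_w (c * x ^ 2) r) _ (locally 0)).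
  - apply (is_lim_inv (fun y => y) p_infty p_infty); [apply is_lim_id | discriminate].
  - replace (sqrt 3) with (sol_w (c * 0 ^ 2) r)
      by (rewrite pow_i, Rmult_0_r, sol_w_0 by lia; reflexivity).
    apply (continuous_comp (fun x => sol_s (c * x ^ 2) r) tan_of_sin).
    + apply (ex_derive_continuous (K := R_AbsRing) (V := R_NormedModule)).
      unfold sol_s. auto_derive. exact I.
    + rewrite pow_i, Rmult_0_r, sol_s_0 by lia.
      exact (continuous_tan_of_sin _ sqrt3_half_range).
Qed.

Lemma sol_w_upper_branch (K rb : R) : 0 < rb -> sol_s K rb = 1 ->
  sol_on 0 rb (sol_w K)
  /\ (forall r, 0 < r < rb -> sqrt 3 < sol_w K r)
  /\ filterlim (sol_w K) (at_right 0) (Rbar_locally (Finite (sqrt 3)))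
  /\ filterlim (sol_w K) (at_left rb) (Rbar_locally p_infty).
Proof.
  intros Hrb Hend. split; [| split; [| split]].
  - exact (sol_w_solution K rb Hrb (or_introl Hend)).
  - intros r Hr. apply sqrt3_lt_tan_of_sin. split.
    + unfold sol_s in *. pose proof sqrt3_lt_2.
      assert (0 < K) by (destruct (Rle_dec K 0); [nra | lra]).
      assert (0 < K * r ^ 2) by (apply Rmult_lt_0_compat; [lra | apply pow_lt; lra]). lra.
    + apply (sol_s_range_iff K r rb); auto; lra.
  - apply sol_w_at_right_0.
  - exact (sol_w_at_left_pinfty K rb Hrb Hend).
Qed.

Lemma sol_w_lower_branch (K rb : R) : 0 < rb -> sol_s K rb = -1 ->
  sol_on 0 rb (sol_w K)
  /\ (forall r, 0 < r < rb -> sol_w K r < sqrt 3)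
  /\ filterlim (sol_w K) (at_right 0) (Rbar_locally (Finite (sqrt 3)))
  /\ filterlim (sol_w K) (at_left rb) (Rbar_locally m_infty).
Proof.
  intros Hrb Hend. split; [| split; [| split]].
  - exact (sol_w_solution K rb Hrb (or_intror Hend)).
  - intros r Hr. apply tan_of_sin_lt_sqrt3. split.
    + apply (sol_s_range_iff K r rb); auto; lra.
    + unfold sol_s in *. pose proof sqrt3_pos.
      assert (K < 0) by (destruct (Rle_dec 0 K); [nra | lra]).
      assert (0 < - K * r ^ 2) by (apply Rmult_lt_0_compat; [lra | apply pow_lt; lra]). lra.
  - apply sol_w_at_right_0.
  - exact (sol_w_at_left_minfty K rb Hrb Hend).
Qed.

Lemma param_limit_of_sol_w (f : R -> R -> R) (c r : R) :
  (forall y, 0 < y -> f y = sol_w (c / y ^ 2)) ->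
  filterlim (fun y => f y r) (Rbar_locally p_infty) (Rbar_locally (Finite (sqrt 3))).
Proof.
  intros Hf. apply (filterlim_ext_loc (fun y => sol_w (c / y ^ 2) r)).
  - exists 0. intros y Hy. now rewrite Hf.
  - apply sol_w_param_limit.
Qed.

Definition first_integral (w : R -> R) (r : R) : R :=
  (sin_of_tan (w r) - sqrt 3 / 2) / r ^ 2.

Lemma is_derive_first_integral (w : R -> R) (r : R) : 0 < r ->
  is_derive w r (Fode (w r) / r) -> is_derive (first_integral w) r 0.
Proof.
  intros Hr Hw.
  assert (HT : 0 < sqrt (1 + w r ^ 2)) by (apply sqrt_lt_R0; nra).
  unfold first_integral.
  evar (d : R). replace 0 with d; unfold d.
  - apply (is_derive_div (fun t => sin_of_tan (w t) - sqrt 3 / 2) (fun t => t ^ 2)).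
    + apply (is_derive_minus (fun t => sin_of_tan (w t)) (fun _ => sqrt 3 / 2)).
      * apply (is_derive_comp sin_of_tan w); [apply is_derive_sin_of_tan | exact Hw].
      * apply is_derive_const.
    + apply (is_derive_pow (fun t => t) 2 r 1), (is_derive_id (K := R_AbsRing)).
    + apply pow_nonzero; lra.
  - rewrite Fode_sin_of_tan.
    unfold minus, plus, opp, zero, scal; simpl; unfold mult; simpl.
    replace (1 + w r * (w r * 1)) with (1 + w r ^ 2) by ring.
    field. lra.
Qed.

Lemma first_integral_constant (a : R) (b : Rbar) (w : R -> R) :
  0 <= a -> sol_on a b w ->
  forall x y, a < x -> Rbar_lt x b -> a < y -> Rbar_lt y b ->
  first_integral w x = first_integral w y.
Proof.
  intros Ha Hw.
  assert (Hle : forall x y : R, a < x -> Rbar_lt y b -> x <= y ->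
            first_integral w x = first_integral w y).
  { intros x y Hx Hy Hxy. destruct (Req_dec x y) as [<- | Hne]; [reflexivity |].
    apply eq_is_derive; [| lra].
    intros t Ht. apply is_derive_first_integral; [lra |].
    apply Hw; [simpl; lra | apply (Rbar_le_lt_trans t y b); [simpl; lra | exact Hy]]. }
  intros x y Hx Hxb Hy Hyb. destruct (Rle_dec x y).
  - now apply Hle.
  - symmetry. apply Hle; auto; lra.
Qed.

Lemma Rbar_lt_exists_between (a : R) (b : Rbar) :
  Rbar_lt a b -> exists x, a < x /\ Rbar_lt x b.
Proof.
  destruct b as [b | |]; simpl; intros H; [| | contradiction].
  - exists ((a + b) / 2). simpl. lra.
  - exists (a + 1). simpl. split; [lra | exact I].
Qed.

Lemma solution_eq_sol_w (a : R) (b : Rbar) (w : R -> R) :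
  0 <= a -> Rbar_lt a b -> sol_on a b w ->
  exists K, forall r, a < r -> Rbar_lt r b -> -1 < sol_s K r < 1 /\ w r = sol_w K r.
Proof.
  intros Ha Hab Hw. destruct (Rbar_lt_exists_between a b Hab) as [x [Hx Hxb]].
  exists (first_integral w x). intros r Hr Hrb.
  assert (Hs : sol_s (first_integral w x) r = sin_of_tan (w r)).
  { rewrite (first_integral_constant a b w Ha Hw x r); auto.
    unfold sol_s, first_integral. field. lra. }
  rewrite Hs. destruct (sin_of_tanK (w r)) as [Hbd Hinv].
  split; [exact Hbd | unfold sol_w; rewrite Hs; symmetry; exact Hinv].
Qed.

Lemma w2_sol_w (rho : R) : 0 < rho -> w2 rho = sol_w (1 / rho ^ 2).
Proof.
  intros Hrho. apply functional_extensionality. intros r.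
  assert (Hp : 0 < rho ^ 2) by (apply pow_lt; lra).
  unfold w2, sol_w.
  rewrite <- (tan_of_sin_div (r ^ 2 + sqrt 3 / 2 * rho ^ 2) (rho ^ 2)) by (auto; ring).
  f_equal. unfold sol_s. field. lra.
Qed.

Lemma w3_sol_w (a : R) : 0 < a -> w3 a = sol_w (- (sqrt 3 / 2) / a ^ 2).
Proof.
  intros Ha. apply functional_extensionality. intros r.
  assert (Hp : 0 < a ^ 2) by (apply pow_lt; lra).
  pose proof sqrt3_sqrt3.
  unfold w3, sol_w.
  rewrite <- (tan_of_sin_div (- sqrt 3 * (r ^ 2 - a ^ 2)) (2 * a ^ 2)) by (lra || nra).
  f_equal. unfold sol_s. field. lra.
Qed.

Lemma w3rho_sol_w (rho : R) : 0 < rho -> w3rho rho = sol_w (- 1 / rho ^ 2).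
Proof.
  intros Hrho. apply functional_extensionality. intros r.
  assert (Hp : 0 < rho ^ 2) by (apply pow_lt; lra).
  unfold w3rho, sol_w.
  rewrite <- (tan_of_sin_div (- (r ^ 2 - sqrt 3 / 2 * rho ^ 2)) (rho ^ 2)) by (auto; ring).
  f_equal. unfold sol_s. field. lra.
Qed.

Lemma r0_pos (rho : R) : 0 < rho -> 0 < r0 rho.
Proof.
  intros Hrho. pose proof sqrt3_lt_2. unfold r0.
  apply Rmult_lt_0_compat; [apply sqrt_lt_R0; lra | exact Hrho].
Qed.

Lemma sol_s_r0 (rho : R) : 0 < rho -> sol_s (1 / rho ^ 2) (r0 rho) = 1.
Proof.
  intros Hrho. pose proof sqrt3_lt_2. unfold sol_s, r0.
  rewrite Rpow_mult_distr, pow2_sqrt by lra. field. lra.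
Qed.

Lemma bnd_pos (a : R) : 0 < a -> 0 < bnd a.
Proof.
  intros Ha. pose proof sqrt3_pos. unfold bnd.
  apply Rmult_lt_0_compat; [apply sqrt_lt_R0, Rdiv_lt_0_compat; lra | exact Ha].
Qed.

Lemma sol_s_bnd (a : R) : 0 < a -> sol_s (- (sqrt 3 / 2) / a ^ 2) (bnd a) = -1.
Proof.
  intros Ha. pose proof sqrt3_pos. unfold sol_s, bnd.
  rewrite Rpow_mult_distr, pow2_sqrt by (apply Rlt_le, Rdiv_lt_0_compat; lra).
  field. lra.
Qed.

Lemma bnd_bnd_rho (a rho : R) : 0 < a -> 0 < rho -> a ^ 2 = sqrt 3 / 2 * rho ^ 2 ->
  bnd a = bnd_rho rho.
Proof.
  intros Ha Hrho E. pose proof sqrt3_pos. unfold bnd, bnd_rho.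
  apply Rsqr_inj; try (apply Rmult_le_pos; [apply sqrt_pos | lra]).
  rewrite !Rsqr_pow2, !Rpow_mult_distr, !pow2_sqrt, E by (try apply Rlt_le, Rdiv_lt_0_compat; lra).
  field. lra.
Qed.

Lemma Rbar_le_of_forall_lt (a : R) (b : Rbar) (c : R) : Rbar_lt a b ->
  (forall r, a < r -> Rbar_lt r b -> r < c) -> Rbar_le b c.
Proof.
  intros Hab H. destruct b as [b | |]; simpl in *.
  - destruct (Rle_dec b c) as [Hbc | Hbc]; [exact Hbc | exfalso].
    assert (Hm : (Rmax a c + b) / 2 < c).
    { pose proof (Rmax_lub_lt a c b Hab); apply H; simpl; pose proof (Rmax_l a c); lra. }
    pose proof (Rmax_r a c). pose proof (Rmax_lub_lt a c b Hab). lra.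
  - assert (Hm : Rmax a c + 1 < c) by (apply H; simpl; [pose proof (Rmax_l a c); lra | exact I]).
    pose proof (Rmax_r a c). lra.
  - exact I.
Qed.

Lemma sol_interval_le_endpoint (a : R) (b : Rbar) (K rb : R) :
  0 <= a -> Rbar_lt a b -> 0 < rb -> sol_s K rb = 1 \/ sol_s K rb = -1 ->
  (forall r, a < r -> Rbar_lt r b -> -1 < sol_s K r < 1) -> Rbar_le b rb.
Proof.
  intros Ha Hab Hrb Hend Hrange. apply (Rbar_le_of_forall_lt a); [exact Hab |].
  intros r Hr Hrrb. apply (sol_s_range_iff K r rb); auto; lra.
Qed.

Lemma solution_classification (a b : Rbar) (w : R -> R) :
  adm_interval a b -> sol_on a b w ->
     (forall r : R, Rbar_lt a r -> Rbar_lt r b -> w r = sqrt 3)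
     \/ (exists rho0 : R, 0 < rho0 /\ Rbar_le b (Finite (r0 rho0)) /\
           forall r : R, Rbar_lt a r -> Rbar_lt r b -> w r = w2 rho0 r)
     \/ (exists a0 : R, 0 < a0 /\ Rbar_le b (Finite (bnd a0)) /\
           forall r : R, Rbar_lt a r -> Rbar_lt r b -> w r = w3 a0 r).
Proof.
  intros [Ha Hab] Hw.
  destruct a as [a | |]; [simpl in Ha | destruct b; contradiction | contradiction].
  destruct (solution_eq_sol_w a b w Ha Hab Hw) as [K HK].
  pose proof sqrt3_pos.
  destruct (Rtotal_order K 0) as [HKn | [-> | HKp]].
  - right; right.
    assert (Hq : 0 < sqrt 3 / 2 / - K) by (apply Rdiv_lt_0_compat; lra).
    set (a0 := sqrt (sqrt 3 / 2 / - K)).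
    assert (Ha0 : 0 < a0) by now apply sqrt_lt_R0.
    assert (EK : - (sqrt 3 / 2) / a0 ^ 2 = K) by (unfold a0; rewrite pow2_sqrt by lra; field; lra).
    exists a0. split; [exact Ha0 | split].
    + apply (sol_interval_le_endpoint a b K); auto using bnd_pos.
      * right. rewrite <- EK. now apply sol_s_bnd.
      * intros r Hr Hrb. apply HK; auto.
    + intros r Hr Hrb. rewrite w3_sol_w, EK by exact Ha0. apply HK; auto.
  - left. intros r Hr Hrb. rewrite (proj2 (HK r Hr Hrb)). apply sol_w_0.
  - right; left.
    set (rho := / sqrt K).
    assert (Hrho : 0 < rho) by (apply Rinv_0_lt_compat, sqrt_lt_R0; lra).
    assert (EK : 1 / rho ^ 2 = K) by (unfold rho; rewrite pow_inv, pow2_sqrt by lra; field; lra).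
    exists rho. split; [exact Hrho | split].
    + apply (sol_interval_le_endpoint a b K); auto using r0_pos.
      * left. rewrite <- EK. now apply sol_s_r0.
      * intros r Hr Hrb. apply HK; auto.
    + intros r Hr Hrb. rewrite w2_sol_w, EK by exact Hrho. apply HK; auto.
Qed.

Theorem theorem4p3 :
  (forall (a b : Rbar) (w : R -> R), adm_interval a b -> sol_on a b w ->
     (forall r : R, Rbar_lt a r -> Rbar_lt r b -> w r = sqrt 3)
     \/ (exists rho0 : R, 0 < rho0 /\ Rbar_le b (Finite (r0 rho0)) /\
           forall r : R, Rbar_lt a r -> Rbar_lt r b -> w r = w2 rho0 r)
     \/ (exists a0 : R, 0 < a0 /\ Rbar_le b (Finite (bnd a0)) /\
           forall r : R, Rbar_lt a r -> Rbar_lt r b -> w r = w3 a0 r))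
  /\
  sol_on (Finite 0) p_infty (fun _ => sqrt 3)
  /\
  (forall rho0 : R, 0 < rho0 ->
     sol_on (Finite 0) (Finite (r0 rho0)) (w2 rho0)
     /\ (forall r : R, 0 < r < r0 rho0 -> sqrt 3 < w2 rho0 r)
     /\ filterlim (w2 rho0) (at_right 0) (Rbar_locally (Finite (sqrt 3)))
     /\ filterlim (w2 rho0) (at_left (r0 rho0)) (Rbar_locally p_infty))
  /\
  (forall r : R, 0 < r ->
     filterlim (fun rho0 => w2 rho0 r) (Rbar_locally p_infty)
               (Rbar_locally (Finite (sqrt 3))))
  /\
  (forall a0 rho0 : R, 0 < a0 -> 0 < rho0 -> a0 ^ 2 = sqrt 3 / 2 * rho0 ^ 2 ->
     (forall r : R, w3 a0 r = w3rho rho0 r) /\ bnd a0 = bnd_rho rho0)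
  /\
  (forall a0 : R, 0 < a0 ->
     sol_on (Finite 0) (Finite (bnd a0)) (w3 a0)
     /\ w3 a0 a0 = 0
     /\ (forall r : R, 0 < r < bnd a0 -> w3 a0 r < sqrt 3)
     /\ filterlim (w3 a0) (at_right 0) (Rbar_locally (Finite (sqrt 3)))
     /\ filterlim (w3 a0) (at_left (bnd a0)) (Rbar_locally m_infty))
  /\
  (forall r : R, 0 < r ->
     filterlim (fun a0 => w3 a0 r) (Rbar_locally p_infty)
               (Rbar_locally (Finite (sqrt 3)))).
Proof.
  split; [exact solution_classification |].
  split.
  { intros r Hr _. simpl in Hr.
    apply (is_derive_ext (sol_w 0)); [exact sol_w_0 |].
    cbv beta. rewrite <- (sol_w_0 r).
    apply is_derive_sol_w; [exact Hr | rewrite sol_s_0; exact sqrt3_half_range]. }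
  split.
  { intros rho Hrho. rewrite (w2_sol_w rho Hrho).
    exact (sol_w_upper_branch _ _ (r0_pos rho Hrho) (sol_s_r0 rho Hrho)). }
  split; [intros r _; exact (param_limit_of_sol_w w2 1 r w2_sol_w) |].
  split.
  { intros a rho Ha Hrho E. split; [| exact (bnd_bnd_rho a rho Ha Hrho E)].
    intros r. rewrite (w3_sol_w a Ha), (w3rho_sol_w rho Hrho), E.
    f_equal. pose proof sqrt3_pos. field. lra. }
  split.
  { intros a Ha.
    destruct (sol_w_lower_branch _ _ (bnd_pos a Ha) (sol_s_bnd a Ha)) as [Hsol Hrest].
    split; [| split; [unfold w3, Rdiv; ring |]]; rewrite (w3_sol_w a Ha); assumption. }
  intros r _. exact (param_limit_of_sol_w w3 _ r w3_sol_w).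
Qed.
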